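(* The constant stationary solution $\overline U\equiv\kappa$ is linearly stable if $\kappa<1+4\pi^2D$ and linearly unstable if $\kappa>1+4\pi^2D$.
   Context: $\mathbb{T}=[0,1]$ with endpoints identified; $D>0,\kappa>0$. Evolution problem: $\partial_tu=Du_{xx}-u+\kappa e^u/\int_0^1e^{u}dy$ with periodic boundary conditions; $\overline U\equiv\kappa$ is its unique constant stationary solution. The linearization at $\overline U$ is the operator $\varphi\mapsto D\varphi_{xx}+(\kappa-1)\varphi-\kappa\int_0^1\varphi\,dy$ on $L^2(\mathbb{T})$ with domain $W^{2,2}(\mathbb{T})$. Linearly stable means all its eigenvalues are negative; linearly unstable means it has a positive eigenvalue. *)

From Stdlib Require Import Reals.
From Coquelicot Require Import Coquelicot.
Open Scope R_scope.

(* Functions on the torus T = [0,1] with endpoints identified,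
   represented as 1-periodic functions R -> R. *)
Definition periodic1 (f : R -> R) : Prop := forall x, f (x + 1) = f x.

Definition in_domain (phi : R -> R) : Prop :=
  periodic1 phi /\
  (forall x, ex_derive phi x) /\
  (forall x, ex_derive (Derive phi) x) /\
  (forall x, continuous (Derive_n phi 2) x).

(* Linearization at Ubar = kappa:
   phi |-> D phi'' + (kappa - 1) phi - kappa * int_0^1 phi. *)
Definition Lop (D kappa : R) (phi : R -> R) (x : R) : R :=
  D * Derive_n phi 2 x + (kappa - 1) * phi x - kappa * RInt phi 0 1.

Definition is_eigenvalue (D kappa lambda : R) : Prop :=
  exists phi : R -> R,
    in_domain phi /\ (exists x, phi x <> 0) /\
    (forall x, Lop D kappa phi x = lambda * phi x).

Definition linearly_stable (D kappa : R) : Prop :=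
  forall lambda, is_eigenvalue D kappa lambda -> lambda < 0.

Definition linearly_unstable (D kappa : R) : Prop :=
  exists lambda, is_eigenvalue D kappa lambda /\ 0 < lambda.

From Stdlib Require Import Reals Lra.
From Coquelicot Require Import Coquelicot.
Open Scope R_scope.

(* An eigenfunction phi with eigenvalue lambda solves phi'' = m phi + b with
   m = (lambda - kappa + 1) / D, and m > -4 pi^2 when lambda >= 0 and
   kappa < 1 + 4 pi^2 D.  If y is a 1-periodic solution of y'' = m y and g is
   any solution, the Wronskian y' g - y g' is constant; comparing it at x and
   x + 1 gives a linear relation between y x and y' x.  Two solutions g
   (exp (+-sqrt m x) for m > 0, cos and sin (sqrt (-m) x) for m < 0, where
   sqrt (-m) < 2 pi keeps the relations independent) or g = x for m = 0
   force y' = 0.  Applied to y = phi' this gives phi'' = 0; applied again to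
   y = phi with m = 0 it gives phi' = 0.  A constant eigenfunction has
   eigenvalue -1, so lambda < 0.  Conversely cos (2 pi x) has mean zero and
   is an eigenfunction for kappa - 1 - 4 pi^2 D. *)

Lemma derive_eq0_constant (h : R -> R) :
  (forall x, is_derive h x 0) -> forall x y, h x = h y.
Proof.
intros Hh x y.
destruct (Rtotal_order x y) as [Hxy | [Hxy | Hxy]].
- apply (eq_is_derive h); auto.
- now subst.
- symmetry; apply (eq_is_derive h); auto.
Qed.

Lemma Derive_periodic (phi : R -> R) :
  periodic1 phi -> (forall x, ex_derive phi x) -> periodic1 (Derive phi).
Proof.
intros Hper Hd x.
symmetry; apply is_derive_unique.
apply (is_derive_ext (fun y => phi (y + 1))); [exact Hper |].
rewrite <- (Rmult_1_l (Derive phi (x + 1))).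
apply (is_derive_comp phi (fun y => y + 1) x (Derive phi (x + 1)) 1).
- apply Derive_correct, Hd.
- auto_derive; auto; ring.
Qed.

Section PeriodicSolutions.

Variables (m : R) (f f' : R -> R).
Hypothesis f_derive : forall x, is_derive f x (f' x).
Hypothesis f'_derive : forall x, is_derive f' x (m * f x).

Lemma wronskian_constant (g g' : R -> R) :
  (forall x, is_derive g x (g' x)) -> (forall x, is_derive g' x (m * g x)) ->
  forall x y, f' x * g x - f x * g' x = f' y * g y - f y * g' y.
Proof.
intros Hg Hg'.
apply (derive_eq0_constant (fun x => f' x * g x - f x * g' x)); intro t.
replace 0 with ((m * f t * g t + f' t * g' t) - (f' t * g' t + f t * (m * g t)))
  by ring.
apply (is_derive_minus (fun x => f' x * g x) (fun x => f x * g' x)).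
- apply (is_derive_mult f' g); auto; intros; apply Rmult_comm.
- apply (is_derive_mult f g'); auto; intros; apply Rmult_comm.
Qed.

Hypothesis f_periodic : periodic1 f.
Hypothesis f'_periodic : periodic1 f'.

Lemma periodic_wronskian_increment (g g' : R -> R) :
  (forall x, is_derive g x (g' x)) -> (forall x, is_derive g' x (m * g x)) ->
  forall x, f' x * (g (x + 1) - g x) = f x * (g' (x + 1) - g' x).
Proof.
intros Hg Hg' x.
pose proof (wronskian_constant g g' Hg Hg' x (x + 1)) as W.
rewrite f_periodic, f'_periodic in W.
lra.
Qed.

Lemma derive_eq0_of_increment_det (g g' h h' : R -> R) (x : R) :
  (forall x, is_derive g x (g' x)) -> (forall x, is_derive g' x (m * g x)) ->
  (forall x, is_derive h x (h' x)) -> (forall x, is_derive h' x (m * h x)) ->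
  (g (x + 1) - g x) * (h' (x + 1) - h' x)
    - (h (x + 1) - h x) * (g' (x + 1) - g' x) <> 0 ->
  f' x = 0.
Proof.
intros Hg Hg' Hh Hh' Hdet.
pose proof (periodic_wronskian_increment g g' Hg Hg' x) as Eg.
pose proof (periodic_wronskian_increment h h' Hh Hh' x) as Eh.
eapply Rmult_eq_reg_r; [| exact Hdet].
rewrite Rmult_0_l.
replace (f' x * _) with
  (f' x * (g (x + 1) - g x) * (h' (x + 1) - h' x)
   - f' x * (h (x + 1) - h x) * (g' (x + 1) - g' x)) by ring.
rewrite Eg, Eh.
ring.
Qed.

Lemma periodic_solution_derive_eq0_pos : 0 < m -> forall x, f' x = 0.
Proof.
intros Hm x.
set (a := sqrt m).
assert (Ha : 0 < a) by (apply sqrt_lt_R0; lra).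
assert (Haa : a * a = m) by (apply sqrt_sqrt; lra).
clearbody a.
apply (derive_eq0_of_increment_det
  (fun y => exp (a * (y - x))) (fun y => a * exp (a * (y - x)))
  (fun y => exp (- a * (y - x))) (fun y => - a * exp (- a * (y - x)))).
- intro y; auto_derive; auto; unfold Rminus; ring.
- intro y; auto_derive; auto; rewrite <- Haa; unfold Rminus; ring.
- intro y; auto_derive; auto; unfold Rminus; ring.
- intro y; auto_derive; auto; rewrite <- Haa; unfold Rminus; ring.
- rewrite Rplus_minus_l, Rminus_diag, !Rmult_0_r, exp_0, !Rmult_1_r.
  assert (1 < exp a) by (rewrite <- exp_0; apply exp_increasing; lra).
  assert (exp (- a) < 1) by (rewrite <- exp_0; apply exp_increasing; lra).
  assert (0 < a * ((exp a - 1) * (1 - exp (- a))))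
    by (repeat apply Rmult_lt_0_compat; lra).
  lra.
Qed.

Lemma periodic_solution_derive_eq0_neg :
  -4 * PI ^ 2 < m < 0 -> forall x, f' x = 0.
Proof.
intros Hm x.
set (a := sqrt (- m)).
assert (Ha : 0 < a) by (apply sqrt_lt_R0; lra).
assert (Haa : a * a = - m) by (apply sqrt_sqrt; lra).
clearbody a.
assert (Ha2 : a < 2 * PI) by (pose proof PI_RGT_0; nra).
apply (derive_eq0_of_increment_det
  (fun y => cos (a * (y - x))) (fun y => - a * sin (a * (y - x)))
  (fun y => sin (a * (y - x))) (fun y => a * cos (a * (y - x)))).
- intro y; auto_derive; auto; unfold Rminus; ring.
- intro y; auto_derive; auto; replace m with (- (a * a)) by lra; unfold Rminus; ring.
- intro y; auto_derive; auto; unfold Rminus; ring.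
- intro y; auto_derive; auto; replace m with (- (a * a)) by lra; unfold Rminus; ring.
- rewrite Rplus_minus_l, Rminus_diag, !Rmult_0_r, cos_0, sin_0, !Rmult_1_r.
  assert (Hcos : cos a < 1).
  { replace a with (2 * (a / 2)) by field.
    rewrite cos_2a_sin.
    assert (0 < sin (a / 2)) by (apply sin_gt_0; lra).
    nra. }
  pose proof (sin2_cos2 a) as Hpyth; unfold Rsqr in Hpyth.
  assert (0 < a * (1 - cos a)) by (apply Rmult_lt_0_compat; lra).
  nra.
Qed.

Lemma periodic_solution_derive_eq0 : -4 * PI ^ 2 < m -> forall x, f' x = 0.
Proof.
intros Hm x.
destruct (Rtotal_order m 0) as [Hneg | [Hzero | Hpos]].
- now apply periodic_solution_derive_eq0_neg.
- assert (Inc : f' x * ((x + 1) - x) = f x * (1 - 1)).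
  { apply (periodic_wronskian_increment (fun y => y) (fun _ => 1)).
    + intro y; auto_derive; auto.
    + intro y; rewrite Hzero; auto_derive; auto; ring. }
  lra.
- now apply periodic_solution_derive_eq0_pos.
Qed.

End PeriodicSolutions.

Lemma periodic_ode_solution_derive_eq0 (m b : R) (phi : R -> R) :
  -4 * PI ^ 2 < m -> periodic1 phi ->
  (forall x, ex_derive phi x) -> (forall x, ex_derive (Derive phi) x) ->
  (forall x, Derive (Derive phi) x = m * phi x + b) ->
  forall x, Derive phi x = 0.
Proof.
intros Hm Hper Hd Hdd Hode.
assert (Hd_correct : forall x, is_derive phi x (Derive phi x))
  by (intro; apply Derive_correct, Hd).
assert (Hper' : periodic1 (Derive phi)) by (apply Derive_periodic; auto).
assert (Hsecond : forall x, Derive (Derive phi) x = 0).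
{ apply (periodic_solution_derive_eq0 m (Derive phi)); auto.
  - intro x; apply Derive_correct, Hdd.
  - intro x; apply (is_derive_ext (fun y => m * phi y + b)).
    + intro y; symmetry; apply Hode.
    + auto_derive; [apply Hd | now rewrite Rmult_1_l].
  - apply Derive_periodic; auto. }
apply (periodic_solution_derive_eq0 0 phi); auto.
- intro x; rewrite Rmult_0_l, <- (Hsecond x).
  apply Derive_correct, Hdd.
- pose proof PI_RGT_0; nra.
Qed.

Lemma eigenvalue_lt0 (D kappa lambda : R) :
  0 < D -> kappa < 1 + 4 * PI ^ 2 * D -> is_eigenvalue D kappa lambda ->
  lambda < 0.
Proof.
intros HD Hk [phi [[Hper [Hd [Hdd _]]] [[x1 Hx1] Heig]]].
apply Rnot_le_lt; intro Hlam.
assert (Hode : forall x, Derive (Derive phi) x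
                 = (lambda - kappa + 1) / D * phi x + kappa * RInt phi 0 1 / D).
{ intro x; specialize (Heig x); unfold Lop in Heig.
  change (Derive_n phi 2 x) with (Derive (Derive phi) x) in Heig.
  apply (Rmult_eq_reg_l D); [| lra].
  replace (D * ((lambda - kappa + 1) / D * phi x + kappa * RInt phi 0 1 / D))
    with ((lambda - kappa + 1) * phi x + kappa * RInt phi 0 1) by (field; lra).
  lra. }
assert (Hm : -4 * PI ^ 2 < (lambda - kappa + 1) / D).
{ apply (Rmult_lt_reg_r D); [exact HD |].
  replace ((lambda - kappa + 1) / D * D) with (lambda - kappa + 1) by (field; lra).
  lra. }
pose proof (periodic_ode_solution_derive_eq0 _ _ phi Hm Hper Hd Hdd Hode) as Hflat.
assert (Hconst : forall x, phi x = phi 0)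
  by (intro x; apply (derive_eq0_constant phi); intro y; rewrite <- (Hflat y);
      apply Derive_correct, Hd).
assert (Hc : RInt phi 0 1 = phi 0).
{ rewrite (RInt_ext phi (fun _ => phi 0)) by (intros; apply Hconst).
  rewrite RInt_const; cbn; unfold mult; cbn; ring. }
assert (Hsecond : Derive_n phi 2 x1 = 0).
{ change (Derive (Derive phi) x1 = 0).
  rewrite (Derive_ext _ _ x1 Hflat); apply Derive_const. }
specialize (Heig x1); unfold Lop in Heig.
rewrite Hsecond, (Hconst x1), Hc in Heig; rewrite Hconst in Hx1.
apply Hx1, (Rmult_eq_reg_l (lambda + 1)); lra.
Qed.

Lemma RInt_cos_2PI : RInt (fun x => cos (2 * PI * x)) 0 1 = 0.
Proof.
pose proof PI_RGT_0.
assert (Hprim : forall x, Rmin 0 1 <= x <= Rmax 0 1 ->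
          is_derive (fun y => sin (2 * PI * y) / (2 * PI)) x (cos (2 * PI * x))).
{ intros x _; auto_derive; auto; field; lra. }
assert (Hcont : forall x, Rmin 0 1 <= x <= Rmax 0 1 ->
          continuous (fun y => cos (2 * PI * y)) x).
{ intros x _; apply (ex_derive_continuous (K := R_AbsRing) (V := R_NormedModule)).
  auto_derive; auto. }
rewrite (is_RInt_unique _ _ _ _ (is_RInt_derive _ _ 0 1 Hprim Hcont)).
rewrite Rmult_1_r, Rmult_0_r, sin_2PI, sin_0.
cbn; unfold plus, opp; cbn; field; lra.
Qed.

Lemma is_eigenvalue_cos_2PI (D kappa : R) :
  is_eigenvalue D kappa (kappa - 1 - 4 * PI ^ 2 * D).
Proof.
pose (phi := fun x => cos (2 * PI * x)).
assert (Hd : forall x, Derive phi x = - (2 * PI) * sin (2 * PI * x)).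
{ intro x; apply is_derive_unique; unfold phi; auto_derive; auto; ring. }
assert (Hdd : forall x, Derive_n phi 2 x = - (2 * PI) ^ 2 * phi x).
{ intro x; change (Derive (Derive phi) x = - (2 * PI) ^ 2 * phi x).
  rewrite (Derive_ext _ _ x Hd).
  apply is_derive_unique; unfold phi; auto_derive; auto; ring. }
exists phi; split; [split; [| split; [| split]] | split].
- intro x; unfold phi.
  replace (2 * PI * (x + 1)) with (2 * PI * x + 2 * PI) by ring.
  now rewrite cos_plus, cos_2PI, sin_2PI, Rmult_1_r, Rmult_0_r, Rminus_0_r.
- intro x; unfold phi; auto_derive; auto.
- intro x; apply (ex_derive_ext (fun y => - (2 * PI) * sin (2 * PI * y))).
  + intro y; now rewrite Hd.
  + auto_derive; auto.
- intro x; apply (continuous_ext (fun y => - (2 * PI) ^ 2 * phi y));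
    [intro y; now rewrite Hdd |].
  apply (ex_derive_continuous (K := R_AbsRing) (V := R_NormedModule)).
  unfold phi; auto_derive; auto.
- exists 0; unfold phi; rewrite Rmult_0_r, cos_0; apply R1_neq_R0.
- intro x; unfold Lop; rewrite Hdd; unfold phi; rewrite RInt_cos_2PI; ring.
Qed.

Theorem mainTheorem6 (D kappa : R) (hD : 0 < D) (hk : 0 < kappa) :
  (kappa < 1 + 4 * PI ^ 2 * D -> linearly_stable D kappa) /\
  (kappa > 1 + 4 * PI ^ 2 * D -> linearly_unstable D kappa).
Proof.
split.
- intros Hk lambda Heig; exact (eigenvalue_lt0 D kappa lambda hD Hk Heig).
- intro Hk; exists (kappa - 1 - 4 * PI ^ 2 * D).
  split; [apply is_eigenvalue_cos_2PI | lra].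
Qed.
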